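(* Let $\mathscr{B}$ be a $\mathscr{V}$-category with $\mathscr{V}$-kernel-pairs. Then (1) $\mathsf{StrMono}_\mathscr{V}\mathscr{B}=(\mathsf{Epi}_\mathscr{V}\mathscr{B})^{\downarrow_\mathscr{V}}$; (2) if $\mathscr{B}$ also has $\mathscr{V}$-cokernel-pairs, then $\mathsf{Epi}_\mathscr{V}\mathscr{B}=(\mathsf{StrMono}_\mathscr{V}\mathscr{B})^{\uparrow_\mathscr{V}}$.
   Context: $\mathscr{V}$ is a closed symmetric monoidal category. $\mathsf{Mono}_\mathscr{V}\mathscr{B}$: morphisms $m$ with $\mathscr{B}(A,m)$ mono in $\mathscr{V}$ for all $A$; $\mathsf{Epi}_\mathscr{V}\mathscr{B}$: morphisms $e$ with $\mathscr{B}(e,C)$ mono in $\mathscr{V}$ for all $C$. $\mathscr{V}$-kernel-pairs are kernel pairs preserved by all $\mathscr{B}(A,-):\mathscr{B}\to\mathscr{V}$; $\mathscr{V}$-cokernel-pairs are $\mathscr{V}$-kernel-pairs in $\mathscr{B}^{op}$. For $e:A_1\to A_2$, $m:B_1\to B_2$, $e\downarrow_\mathscr{V} m$ means the square formed by $\mathscr{B}(A_2,m)$, $\mathscr{B}(A_1,m)$, $\mathscr{B}(e,B_1)$, $\mathscr{B}(e,B_2)$ is a pullback in $\mathscr{V}$. $\mathscr{E}^{\downarrow_\mathscr{V}}=\{m:\ e\downarrow_\mathscr{V} m\ \forall e\in\mathscr{E}\}$, $\mathscr{M}^{\uparrow_\mathscr{V}}=\{e:\ e\downarrow_\mathscr{V}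 m\ \forall m\in\mathscr{M}\}$. $\mathsf{StrMono}_\mathscr{V}\mathscr{B}:=(\mathsf{Epi}_\mathscr{V}\mathscr{B})^{\downarrow_\mathscr{V}}\cap\mathsf{Mono}_\mathscr{V}\mathscr{B}$ ($\mathscr{V}$-strong-monos). *)

Set Implicit Arguments.
Unset Strict Implicit.

Record Category := {
  Ob :> Type;
  Hom : Ob -> Ob -> Type;
  cmp : forall a b c, Hom b c -> Hom a b -> Hom a c;
  idn : forall a, Hom a a;
  cmp_idl : forall a b (f : Hom a b), cmp (idn b) f = f;
  cmp_idr : forall a b (f : Hom a b), cmp f (idn a) = f;
  cmp_assoc : forall a b c d (h : Hom c d) (g : Hom b c) (f : Hom a b),
      cmp h (cmp g f) = cmp (cmp h g) f }.
Arguments Hom {C} a b : rename.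
Arguments cmp {C a b c} g f : rename.
Arguments idn {C} a : rename.

Notation "g ∘ f" := (cmp g f) (at level 40, left associativity).

Definition mono {C : Category} {a b : C} (f : Hom a b) : Prop :=
  forall x (u v : Hom x a), f ∘ u = f ∘ v -> u = v.

Definition is_pullback {C : Category} {P X Y Z : C}
  (f : Hom X Z) (g : Hom Y Z) (p1 : Hom P X) (p2 : Hom P Y) : Prop :=
  f ∘ p1 = g ∘ p2 /\
  forall T (u : Hom T X) (v : Hom T Y), f ∘ u = g ∘ v ->
    exists! w : Hom T P, p1 ∘ w = u /\ p2 ∘ w = v.

Record ClosedSymMonoidal (V : Category) := {
  tns : V -> V -> V;
  tnsh : forall a b c d, Hom a b -> Hom c d -> Hom (tns a c) (tns b d);
  tnsh_id : forall a c, tnsh (idn a) (idn c) = idn (tns a c);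
  tnsh_cmp : forall a b e c d f (g1 : Hom b e) (g2 : Hom a b)
      (h1 : Hom d f) (h2 : Hom c d),
      tnsh (g1 ∘ g2) (h1 ∘ h2) = tnsh g1 h1 ∘ tnsh g2 h2;
  unt : V;
  asc : forall a b c, Hom (tns (tns a b) c) (tns a (tns b c));
  asc_inv : forall a b c, Hom (tns a (tns b c)) (tns (tns a b) c);
  asc_iso1 : forall a b c, asc_inv a b c ∘ asc a b c = idn _;
  asc_iso2 : forall a b c, asc a b c ∘ asc_inv a b c = idn _;
  asc_nat : forall a1 a2 a3 b1 b2 b3 (f : Hom a1 b1) (g : Hom a2 b2)
      (h : Hom a3 b3),
      asc b1 b2 b3 ∘ tnsh (tnsh f g) h = tnsh f (tnsh g h) ∘ asc a1 a2 a3;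
  lu : forall a, Hom (tns unt a) a;
  lu_inv : forall a, Hom a (tns unt a);
  lu_iso1 : forall a, lu_inv a ∘ lu a = idn _;
  lu_iso2 : forall a, lu a ∘ lu_inv a = idn _;
  lu_nat : forall a b (f : Hom a b), lu b ∘ tnsh (idn unt) f = f ∘ lu a;
  ru : forall a, Hom (tns a unt) a;
  ru_inv : forall a, Hom a (tns a unt);
  ru_iso1 : forall a, ru_inv a ∘ ru a = idn _;
  ru_iso2 : forall a, ru a ∘ ru_inv a = idn _;
  ru_nat : forall a b (f : Hom a b), ru b ∘ tnsh f (idn unt) = f ∘ ru a;
  pentagon : forall a b c d,
      asc a b (tns c d) ∘ asc (tns a b) c d
      = tnsh (idn a) (asc b c d) ∘ asc a (tns b c) d ∘ tnsh (asc a b c) (idn d);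
  triangle : forall a b,
      tnsh (idn a) (lu b) ∘ asc a unt b = tnsh (ru a) (idn b);
  sym : forall a b, Hom (tns a b) (tns b a);
  sym_nat : forall a1 a2 b1 b2 (f : Hom a1 b1) (g : Hom a2 b2),
      sym b1 b2 ∘ tnsh f g = tnsh g f ∘ sym a1 a2;
  sym_invol : forall a b, sym b a ∘ sym a b = idn _;
  hexagon : forall a b c,
      asc b c a ∘ sym a (tns b c) ∘ asc a b c
      = tnsh (idn b) (sym a c) ∘ asc b a c ∘ tnsh (sym a b) (idn c);
  (* closedness: each (- ⊗ b) has a right adjoint [b, -] *)
  ihom : V -> V -> V;
  ev : forall b c, Hom (tns (ihom b c) b) c;
  ev_univ : forall a b c (f : Hom (tns a b) c),
      exists! g : Hom a (ihom b c), ev b c ∘ tnsh g (idn b) = f }.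
Arguments tns {V} M a b : rename.
Arguments tnsh {V} M {a b c d} f g : rename.
Arguments unt {V} M : rename.
Arguments asc {V} M a b c : rename.
Arguments lu {V} M a : rename.
Arguments lu_inv {V} M a : rename.
Arguments ru {V} M a : rename.
Arguments ru_inv {V} M a : rename.

Record VCategory (V : Category) (M : ClosedSymMonoidal V) := {
  vob :> Type;
  vhom : vob -> vob -> V;
  vcomp : forall a b c, Hom (tns M (vhom b c) (vhom a b)) (vhom a c);
  vid : forall a, Hom (unt M) (vhom a a);
  vassoc : forall a b c d,
      vcomp a b d ∘ tnsh M (vcomp b c d) (idn (vhom a b))
      = vcomp a c d ∘ tnsh M (idn (vhom c d)) (vcomp a b c)
        ∘ asc M (vhom c d) (vhom b c) (vhom a b);
  vunitl : forall a b, vcomp a b b ∘ tnsh M (vid b) (idn (vhom a b)) = lu M (vhom a b);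
  vunitr : forall a b, vcomp a a b ∘ tnsh M (idn (vhom a b)) (vid a) = ru M (vhom a b) }.
Arguments vhom {V M} B a b : rename.
Arguments vcomp {V M} B a b c : rename.
Arguments vid {V M} B a : rename.

Section VNotions.
Context {V : Category} {M : ClosedSymMonoidal V} (B : VCategory M).

(* morphisms of the underlying ordinary category B_0 *)
Definition uhom (a b : B) : Type := Hom (unt M) (vhom B a b).

Definition ucomp {a b c : B} (g : uhom b c) (f : uhom a b) : uhom a c :=
  vcomp B a b c ∘ tnsh M g f ∘ lu_inv M (unt M).

Definition postc (A : B) {b1 b2 : B} (m : uhom b1 b2)
  : Hom (vhom B A b1) (vhom B A b2) :=
  vcomp B A b1 b2 ∘ tnsh M m (idn _) ∘ lu_inv M (vhom B A b1).

Definition prec {a1 a2 : B} (e : uhom a1 a2) (C : B)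
  : Hom (vhom B a2 C) (vhom B a1 C) :=
  vcomp B a1 a2 C ∘ tnsh M (idn _) e ∘ ru_inv M (vhom B a2 C).

Definition MorClass := forall a b : B, uhom a b -> Prop.

Definition MonoV : MorClass := fun b1 b2 m => forall A : B, mono (postc A m).
Definition EpiV : MorClass := fun c1 c2 e => forall C : B, mono (prec e C).

Definition ukernel_pair {k b1 b2 : B} (m : uhom b1 b2) (p1 p2 : uhom k b1) : Prop :=
  ucomp m p1 = ucomp m p2 /\
  forall x (u v : uhom x b1), ucomp m u = ucomp m v ->
    exists! w : uhom x k, ucomp p1 w = u /\ ucomp p2 w = v.

Definition Vkernel_pair {k b1 b2 : B} (m : uhom b1 b2) (p1 p2 : uhom k b1) : Prop :=
  ukernel_pair m p1 p2 /\
  forall A : B, is_pullback (postc A m) (postc A m) (postc A p1) (postc A p2).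

Definition has_Vkernel_pairs : Prop :=
  forall (b1 b2 : B) (m : uhom b1 b2),
    exists (k : B) (p1 p2 : uhom k b1), Vkernel_pair m p1 p2.

Definition ucokernel_pair {a1 a2 q : B} (e : uhom a1 a2) (i1 i2 : uhom a2 q) : Prop :=
  ucomp i1 e = ucomp i2 e /\
  forall x (u v : uhom a2 x), ucomp u e = ucomp v e ->
    exists! w : uhom q x, ucomp w i1 = u /\ ucomp w i2 = v.

(* V-cokernel-pair = V-kernel-pair in B^op, written out: a cokernel pair
   preserved by every B^op(C,-) = B(-,C) *)
Definition Vcokernel_pair {a1 a2 q : B} (e : uhom a1 a2) (i1 i2 : uhom a2 q) : Prop :=
  ucokernel_pair e i1 i2 /\
  forall C : B, is_pullback (prec e C) (prec e C) (prec i1 C) (prec i2 C).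

Definition has_Vcokernel_pairs : Prop :=
  forall (a1 a2 : B) (e : uhom a1 a2),
    exists (q : B) (i1 i2 : uhom a2 q), Vcokernel_pair e i1 i2.

(* e ↓_V m : the square
      B(A2,B1) --B(A2,m)--> B(A2,B2)
         |B(e,B1)               |B(e,B2)
      B(A1,B1) --B(A1,m)--> B(A1,B2)
   is a pullback in V *)
Definition orthV {a1 a2 b1 b2 : B} (e : uhom a1 a2) (m : uhom b1 b2) : Prop :=
  is_pullback (postc a1 m) (prec e b2) (prec e b1) (postc a2 m).

Definition rorth (E : MorClass) : MorClass :=
  fun b1 b2 m => forall a1 a2 (e : uhom a1 a2), E a1 a2 e -> orthV e m.
Definition lorth (Mc : MorClass) : MorClass :=
  fun a1 a2 e => forall b1 b2 (m : uhom b1 b2), Mc b1 b2 m -> orthV e m.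

Definition StrMonoV : MorClass :=
  fun b1 b2 m => @rorth EpiV b1 b2 m /\ @MonoV b1 b2 m.

End VNotions.

Arguments uhom {V M} B.
Arguments MonoV {V M} B.
Arguments EpiV {V M} B.
Arguments StrMonoV {V M} B.
Arguments rorth {V M} B.
Arguments lorth {V M} B.
Arguments has_Vkernel_pairs {V M} B.
Arguments has_Vcokernel_pairs {V M} B.


(* For (1), let m be right V-orthogonal to every V-epi and (p1, p2) its V-kernel pair.
   The diagonal δ splits p1, so p1 is a V-epi and p1 ↓ m; the square m p2 = m p1 then yields a
   filler d with d p1 = p2, and d = d p1 δ = p2 δ = 1 gives p1 = p2, so m is a V-mono because
   B(A,-) preserves the kernel pair.  For (2), dually, the first leg i1 of the V-cokernel pair
   of e is split by the codiagonal; split monos are V-strong-monos, so e ↓ i1 forces i1 = i2,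
   and e is a V-epi because B(-,C) preserves the cokernel pair. *)

Section CategoryFacts.
Context {C : Category}.

Lemma whisker2 {a b c x : C} (f : Hom a b) (g : Hom b c) (r : Hom a c) (X : Hom c x) :
  g ∘ f = r -> X ∘ g ∘ f = X ∘ r.
Proof. intros H; rewrite <- cmp_assoc, H; reflexivity. Qed.

Lemma whisker3 {a b c d x : C} (f : Hom a b) (g : Hom b c) (h : Hom c d) (r : Hom a d)
  (X : Hom d x) : h ∘ g ∘ f = r -> X ∘ h ∘ g ∘ f = X ∘ r.
Proof. intros H; rewrite <- H, !cmp_assoc; reflexivity. Qed.

Lemma whisker4 {a b c d e x : C} (f : Hom a b) (g : Hom b c) (h : Hom c d) (k : Hom d e)
  (r : Hom a e) (X : Hom e x) : k ∘ h ∘ g ∘ f = r -> X ∘ k ∘ h ∘ g ∘ f = X ∘ r.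
Proof. intros H; rewrite <- H, !cmp_assoc; reflexivity. Qed.

Lemma retraction_mono {a b : C} (i : Hom a b) (j : Hom b a) : j ∘ i = idn a -> mono i.
Proof.
  intros H x f g E.
  rewrite <- (cmp_idl f), <- (cmp_idl g), <- H, <- !cmp_assoc, E; reflexivity.
Qed.

Lemma section_cancel {a b c : C} (i : Hom a b) (j : Hom b a) (f g : Hom b c) :
  i ∘ j = idn b -> f ∘ i = g ∘ i -> f = g.
Proof.
  intros H E. rewrite <- (cmp_idr f), <- (cmp_idr g), <- H, !cmp_assoc, E; reflexivity.
Qed.

Lemma mono_of_pullback_diag {P X Z : C} {f : Hom X Z} {p : Hom P X} :
  is_pullback f f p p -> mono f.
Proof.
  intros [_ Hu] T u v Huv. destruct (Hu T u v Huv) as (w & [<- <-] & _). reflexivity.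
Qed.

(* The filler of [f u = g v] is [r2 v]; [g] being mono is what makes it a filler for [v]. *)
Lemma is_pullback_of_retractions {P X Y Z : C} (f : Hom X Z) (g : Hom Y Z)
  (p1 : Hom P X) (p2 : Hom P Y) (r1 : Hom Z X) (r2 : Hom Y P) :
  f ∘ p1 = g ∘ p2 -> r1 ∘ f = idn X -> r2 ∘ p2 = idn P -> p1 ∘ r2 = r1 ∘ g -> mono g ->
  is_pullback f g p1 p2.
Proof.
  intros Hsq Hr1 Hr2 Hnat Hg. split; [exact Hsq |].
  intros T u v Huv. exists (r2 ∘ v). split; [split |].
  - rewrite cmp_assoc, Hnat, <- cmp_assoc, <- Huv, cmp_assoc, Hr1, cmp_idl. reflexivity.
  - apply Hg. rewrite cmp_assoc, <- Hsq, <- (cmp_assoc f p1), (cmp_assoc p1 r2 v), Hnat.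
    rewrite <- (cmp_assoc r1 g v), <- Huv, (cmp_assoc r1 f u), Hr1, cmp_idl. reflexivity.
  - intros w [_ <-]. rewrite cmp_assoc, Hr2, cmp_idl. reflexivity.
Qed.

End CategoryFacts.

Ltac left_assoc := repeat rewrite cmp_assoc.

(* Rewrites with [L : g ∘ f = r] where [g ∘ f] is a trailing segment of a left-associated
   composite, in which it does not occur syntactically. *)
Ltac rewrite_suffix L :=
  first [ rewrite L | rewrite (whisker4 _ _ _ _ _ _ L) | rewrite (whisker3 _ _ _ _ _ L)
        | rewrite (whisker2 _ _ _ _ L) ]; left_assoc.

Section MonoidalCoherence.
Context {V : Category} (M : ClosedSymMonoidal V).
Local Notation "f ⊗ g" := (tnsh M f g) (at level 35).
Local Notation I := (unt M).

Lemma tnsh_split_lr {a b c d : V} (f : Hom a b) (g : Hom c d) :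
  (f ⊗ idn d) ∘ (idn a ⊗ g) = f ⊗ g.
Proof. rewrite <- tnsh_cmp, cmp_idl, cmp_idr; reflexivity. Qed.

Lemma tnsh_split_rl {a b c d : V} (f : Hom a b) (g : Hom c d) :
  (idn b ⊗ g) ∘ (f ⊗ idn c) = f ⊗ g.
Proof. rewrite <- tnsh_cmp, cmp_idl, cmp_idr; reflexivity. Qed.

Lemma tnsh_cmp_l {a b c d : V} (f : Hom a b) (g : Hom b c) :
  (g ∘ f) ⊗ idn d = (g ⊗ idn d) ∘ (f ⊗ idn d).
Proof. rewrite <- tnsh_cmp, cmp_idl; reflexivity. Qed.

Lemma tnsh_cmp_r {a b c d : V} (f : Hom a b) (g : Hom b c) :
  idn d ⊗ (g ∘ f) = (idn d ⊗ g) ∘ (idn d ⊗ f).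
Proof. rewrite <- tnsh_cmp, cmp_idl; reflexivity. Qed.

Lemma lu_inv_nat {a b : V} (f : Hom a b) : (idn I ⊗ f) ∘ lu_inv M a = lu_inv M b ∘ f.
Proof.
  rewrite <- (cmp_idl (_ ∘ lu_inv M a)), <- (lu_iso1 M b). left_assoc.
  rewrite_suffix (lu_nat M f). rewrite <- cmp_assoc, lu_iso2, cmp_idr. reflexivity.
Qed.

Lemma ru_inv_nat {a b : V} (f : Hom a b) : (f ⊗ idn I) ∘ ru_inv M a = ru_inv M b ∘ f.
Proof.
  rewrite <- (cmp_idl (_ ∘ ru_inv M a)), <- (ru_iso1 M b). left_assoc.
  rewrite_suffix (ru_nat M f). rewrite <- cmp_assoc, ru_iso2, cmp_idr. reflexivity.
Qed.

Lemma asc_inv_nat {a1 a2 a3 b1 b2 b3 : V} (f : Hom a1 b1) (g : Hom a2 b2) (h : Hom a3 b3) :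
  asc_inv M b1 b2 b3 ∘ (f ⊗ (g ⊗ h)) = ((f ⊗ g) ⊗ h) ∘ asc_inv M a1 a2 a3.
Proof.
  apply (retraction_mono _ _ (asc_iso1 M b1 b2 b3)). left_assoc.
  rewrite asc_iso2, cmp_idl. rewrite_suffix (asc_nat M f g h).
  rewrite <- cmp_assoc, asc_iso2, cmp_idr. reflexivity.
Qed.

Lemma tnsh_retraction_l {a b : V} (f : Hom a b) (g : Hom b a) (c : V) :
  g ∘ f = idn a -> (g ⊗ idn c) ∘ (f ⊗ idn c) = idn _.
Proof. intros H. rewrite <- tnsh_cmp_l, H, tnsh_id. reflexivity. Qed.

Lemma tnsh_retraction_r {a b : V} (f : Hom a b) (g : Hom b a) (c : V) :
  g ∘ f = idn a -> (idn c ⊗ g) ∘ (idn c ⊗ f) = idn _.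
Proof. intros H. rewrite <- tnsh_cmp_r, H, tnsh_id. reflexivity. Qed.

Lemma triangle_inv (a b : V) :
  asc_inv M a I b ∘ (idn a ⊗ lu_inv M b) = ru_inv M a ⊗ idn b.
Proof.
  apply (retraction_mono (ru M a ⊗ idn b) (ru_inv M a ⊗ idn b)).
  { apply tnsh_retraction_l, ru_iso1. }
  rewrite <- tnsh_cmp_l, ru_iso2, tnsh_id, <- triangle. left_assoc.
  rewrite_suffix (asc_iso2 M a I b). rewrite cmp_idr, <- tnsh_cmp_r, lu_iso2, tnsh_id.
  reflexivity.
Qed.

Lemma asc_ru_inv (a b : V) :
  asc M a I b ∘ (ru_inv M a ⊗ idn b) = idn a ⊗ lu_inv M b.
Proof. rewrite <- triangle_inv, cmp_assoc, asc_iso2, cmp_idl. reflexivity. Qed.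

Lemma tnsh_unt_r_inj {a b : V} (f g : Hom a b) : f ⊗ idn I = g ⊗ idn I -> f = g.
Proof.
  intros H. apply (section_cancel (ru M a) (ru_inv M a)); [apply ru_iso2 |].
  rewrite <- !ru_nat, H. reflexivity.
Qed.

Lemma tnsh_unt_l_inj {a b : V} (f g : Hom a b) : idn I ⊗ f = idn I ⊗ g -> f = g.
Proof.
  intros H. apply (section_cancel (lu M a) (lu_inv M a)); [apply lu_iso2 |].
  rewrite <- !lu_nat, H. reflexivity.
Qed.

(* Kelly's coherence lemma, from the pentagon and triangle axioms. *)
Lemma asc_ru (a b : V) : (idn a ⊗ ru M b) ∘ asc M a b I = ru M (tns M a b).
Proof.
  apply tnsh_unt_r_inj. symmetry.
  apply (retraction_mono (asc M a b I) (asc_inv M a b I)); [apply asc_iso1 |].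
  rewrite <- (triangle M (tns M a b) I), <- (tnsh_id M a b). left_assoc.
  rewrite asc_nat. rewrite_suffix (pentagon M a b I I).
  rewrite <- (tnsh_cmp M (idn a) (idn a)), cmp_idl, triangle.
  rewrite <- asc_nat, tnsh_cmp_l. left_assoc. reflexivity.
Qed.

Lemma lu_unt : lu M I = ru M I.
Proof.
  assert (Hru : ru M (tns M I I) = ru M I ⊗ idn I).
  { apply (retraction_mono (ru M I) (ru_inv M I)); [apply ru_iso1 |].
    rewrite ru_nat. reflexivity. }
  apply tnsh_unt_l_inj.
  apply (section_cancel (asc M I I I) (asc_inv M I I I)); [apply asc_iso2 |].
  rewrite asc_ru, triangle. symmetry; exact Hru.
Qed.

Lemma lu_inv_unt : lu_inv M I = ru_inv M I.
Proof.
  apply (retraction_mono (lu M I) (lu_inv M I)); [apply lu_iso1 |].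
  rewrite lu_iso2, lu_unt, ru_iso2. reflexivity.
Qed.

Lemma asc_lu_inv_ru_inv (X : V) :
  asc M I X I ∘ (lu_inv M X ⊗ idn I) ∘ ru_inv M X = (idn I ⊗ ru_inv M X) ∘ lu_inv M X.
Proof.
  apply (retraction_mono (idn I ⊗ ru M X) (idn I ⊗ ru_inv M X)).
  { apply tnsh_retraction_r, ru_iso1. }
  left_assoc. rewrite <- tnsh_cmp_r, ru_iso2, tnsh_id, cmp_idl, asc_ru.
  rewrite_suffix (ru_nat M (lu_inv M X)). rewrite <- cmp_assoc, ru_iso2, cmp_idr.
  reflexivity.
Qed.

End MonoidalCoherence.

Section Representables.
Context {V : Category} {M : ClosedSymMonoidal V} {B : VCategory M}.
Local Notation "f ⊗ g" := (tnsh M f g) (at level 35).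
Local Notation I := (unt M).

Lemma vassoc_inv (a b c d : B) :
  vcomp B a b d ∘ (vcomp B b c d ⊗ idn _) ∘ asc_inv M _ _ _
  = vcomp B a c d ∘ (idn _ ⊗ vcomp B a b c).
Proof. rewrite vassoc, <- cmp_assoc, asc_iso2, cmp_idr. reflexivity. Qed.

Lemma postc_elt (A : B) {b1 b2 : B} (m : uhom B b1 b2) (f : uhom B A b1) :
  postc A m ∘ f = ucomp m f.
Proof.
  unfold postc, ucomp. rewrite <- cmp_assoc, <- lu_inv_nat. left_assoc.
  rewrite <- (cmp_assoc _ (_ ⊗ idn _)), tnsh_split_lr. reflexivity.
Qed.

Lemma prec_elt {a1 a2 : B} (e : uhom B a1 a2) (C : B) (f : uhom B a2 C) :
  prec e C ∘ f = ucomp f e.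
Proof.
  unfold prec, ucomp. rewrite <- cmp_assoc, <- ru_inv_nat. left_assoc.
  rewrite <- (cmp_assoc _ (idn _ ⊗ _)), tnsh_split_rl, lu_inv_unt. reflexivity.
Qed.

Lemma postc_vid (A b : B) : postc A (vid B b) = idn _.
Proof. unfold postc. rewrite vunitl, lu_iso2. reflexivity. Qed.

Lemma prec_vid (a C : B) : prec (vid B a) C = idn _.
Proof. unfold prec. rewrite vunitr, ru_iso2. reflexivity. Qed.

Lemma postc_ucomp (A : B) {a b c : B} (g : uhom B b c) (f : uhom B a b) :
  postc A (ucomp g f) = postc A g ∘ postc A f.
Proof.
  unfold postc, ucomp. rewrite lu_inv_unt, !tnsh_cmp_l. left_assoc.
  rewrite <- triangle_inv. left_assoc.
  rewrite_suffix (eq_sym (asc_inv_nat M g f (idn (vhom B A a)))).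
  rewrite_suffix (vassoc_inv A a b c).
  rewrite_suffix (eq_sym (lu_inv_nat M (vcomp B A a b))).
  rewrite_suffix (tnsh_split_lr M g (vcomp B A a b)).
  rewrite <- (tnsh_split_rl M g (vcomp B A a b)). left_assoc.
  rewrite_suffix (eq_sym (lu_inv_nat M (f ⊗ idn (vhom B A a)))).
  rewrite_suffix (tnsh_split_lr M g (f ⊗ idn (vhom B A a))).
  rewrite_suffix (lu_inv_nat M (lu_inv M (vhom B A a))). reflexivity.
Qed.

Lemma prec_ucomp {a b c : B} (g : uhom B b c) (f : uhom B a b) (C : B) :
  prec (ucomp g f) C = prec f C ∘ prec g C.
Proof.
  unfold prec, ucomp. rewrite !tnsh_cmp_r. left_assoc.
  rewrite_suffix (eq_sym (ru_inv_nat M (vcomp B b c C))).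
  rewrite_suffix (eq_sym (ru_inv_nat M (idn (vhom B c C) ⊗ g))).
  rewrite_suffix (tnsh_split_rl M (vcomp B b c C) f).
  rewrite <- (tnsh_split_lr M (vcomp B b c C) f). left_assoc.
  rewrite_suffix (tnsh_split_rl M (idn (vhom B c C) ⊗ g) f).
  rewrite_suffix (vassoc a b c C).
  rewrite_suffix (asc_nat M (idn (vhom B c C)) g f).
  rewrite_suffix (eq_sym (ru_inv_nat M (ru_inv M (vhom B c C)))).
  rewrite_suffix (asc_ru_inv M (vhom B c C) I). reflexivity.
Qed.

(* Associativity of vcomp in the middle variable, plus the coherence of [lu] and [ru]. *)
Lemma prec_postc {a1 a2 b1 b2 : B} (e : uhom B a1 a2) (m : uhom B b1 b2) :
  prec e b2 ∘ postc a2 m = postc a1 m ∘ prec e b1.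
Proof.
  unfold prec, postc. left_assoc.
  rewrite_suffix (eq_sym (ru_inv_nat M (vcomp B a2 b1 b2))).
  rewrite_suffix (tnsh_split_rl M (vcomp B a2 b1 b2) e).
  rewrite <- (tnsh_split_lr M (vcomp B a2 b1 b2) e). left_assoc.
  rewrite_suffix (vassoc a1 a2 b1 b2).
  rewrite <- (tnsh_id M (vhom B b1 b2) (vhom B a2 b1)).
  rewrite_suffix (asc_nat M (idn (vhom B b1 b2)) (idn (vhom B a2 b1)) e).
  rewrite_suffix (eq_sym (ru_inv_nat M (m ⊗ idn (vhom B a2 b1)))).
  rewrite_suffix (asc_nat M m (idn (vhom B a2 b1)) (idn I)).
  rewrite_suffix (eq_sym (ru_inv_nat M (lu_inv M (vhom B a2 b1)))).
  rewrite_suffix (asc_lu_inv_ru_inv M (vhom B a2 b1)).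
  rewrite_suffix (eq_sym (lu_inv_nat M (vcomp B a1 a2 b1))).
  rewrite_suffix (tnsh_split_lr M m (vcomp B a1 a2 b1)).
  rewrite <- (tnsh_split_rl M m (vcomp B a1 a2 b1)). left_assoc.
  rewrite_suffix (eq_sym (lu_inv_nat M (idn (vhom B a2 b1) ⊗ e))).
  rewrite_suffix (eq_sym (lu_inv_nat M (ru_inv M (vhom B a2 b1)))).
  rewrite (tnsh_id M (vhom B a2 b1) I).
  rewrite_suffix (tnsh_split_rl M m (idn (vhom B a2 b1) ⊗ e)).
  rewrite_suffix (tnsh_split_lr M m (idn (vhom B a2 b1) ⊗ e)).
  reflexivity.
Qed.

Lemma ucomp_assoc {a b c d : B} (h : uhom B c d) (g : uhom B b c) (f : uhom B a b) :
  ucomp h (ucomp g f) = ucomp (ucomp h g) f.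
Proof.
  rewrite <- (postc_elt _ g f), <- (postc_elt _ h), <- (postc_elt _ (ucomp h g)).
  rewrite postc_ucomp, cmp_assoc. reflexivity.
Qed.

Lemma ucomp_vidl {a b : B} (f : uhom B a b) : ucomp (vid B b) f = f.
Proof. rewrite <- postc_elt, postc_vid, cmp_idl. reflexivity. Qed.

Lemma ucomp_vidr {a b : B} (f : uhom B a b) : ucomp f (vid B a) = f.
Proof. rewrite <- prec_elt, prec_vid, cmp_idl. reflexivity. Qed.

End Representables.

Section Orthogonality.
Context {V : Category} {M : ClosedSymMonoidal V} {B : VCategory M}.

Lemma orthV_lift {a1 a2 b1 b2 : B} {e : uhom B a1 a2} {m : uhom B b1 b2}
  {u : uhom B a1 b1} {v : uhom B a2 b2} :
  orthV e m -> ucomp m u = ucomp v e ->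
  exists w : uhom B a2 b1, ucomp w e = u /\ ucomp m w = v.
Proof.
  intros [_ Hpb] Hsq.
  destruct (Hpb (unt M) u v) as (w & [Hwe Hmw] & _).
  { rewrite postc_elt, prec_elt. exact Hsq. }
  exists w. rewrite <- prec_elt, <- postc_elt. split; assumption.
Qed.

Lemma orthV_split_epi_eq {a b c : B} {e u : uhom B a b} {s : uhom B b a} {m : uhom B b c} :
  ucomp e s = vid B b -> ucomp u s = vid B b -> orthV e m ->
  ucomp m u = ucomp m e -> u = e.
Proof.
  intros Hes Hus He Hsq.
  destruct (orthV_lift He Hsq) as (d & Hde & Hmd).
  assert (Hd : d = vid B b).
  { transitivity (ucomp d (ucomp e s)); [rewrite Hes, ucomp_vidr; reflexivity |].
    rewrite ucomp_assoc, Hde. exact Hus. }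
  rewrite <- Hde, Hd, ucomp_vidl. reflexivity.
Qed.

Lemma orthV_split_mono_eq {a b c : B} {e : uhom B a b} {m v : uhom B b c} {r : uhom B c b} :
  ucomp r m = vid B b -> ucomp r v = vid B b -> orthV e m ->
  ucomp v e = ucomp m e -> v = m.
Proof.
  intros Hrm Hrv He Hsq.
  destruct (orthV_lift He (eq_sym Hsq)) as (d & Hde & Hmd).
  assert (Hd : d = vid B b).
  { transitivity (ucomp (ucomp r m) d); [rewrite Hrm, ucomp_vidl; reflexivity |].
    rewrite <- ucomp_assoc, Hmd. exact Hrv. }
  rewrite <- Hmd, Hd, ucomp_vidr. reflexivity.
Qed.

Lemma EpiV_split {a b : B} {p : uhom B a b} {s : uhom B b a} :
  ucomp p s = vid B b -> EpiV B a b p.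
Proof.
  intros Hps C. apply (retraction_mono _ (prec s C)).
  rewrite <- prec_ucomp, Hps, prec_vid. reflexivity.
Qed.

Lemma MonoV_split {a b : B} {m : uhom B a b} {r : uhom B b a} :
  ucomp r m = vid B a -> MonoV B a b m.
Proof.
  intros Hrm A. apply (retraction_mono _ (postc A r)).
  rewrite <- postc_ucomp, Hrm, postc_vid. reflexivity.
Qed.

Lemma StrMonoV_split {a b : B} {m : uhom B a b} {r : uhom B b a} :
  ucomp r m = vid B a -> StrMonoV B a b m.
Proof.
  intros Hrm. split; [| exact (MonoV_split Hrm)].
  intros c1 c2 e He. apply (is_pullback_of_retractions _ _ _ _ (postc c1 r) (postc c2 r)).
  - symmetry. apply prec_postc.
  - rewrite <- postc_ucomp, Hrm, postc_vid. reflexivity.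
  - rewrite <- postc_ucomp, Hrm, postc_vid. reflexivity.
  - apply prec_postc.
  - apply He.
Qed.

Lemma MonoV_of_Vkernel_pair_diag {k b1 b2 : B} {m : uhom B b1 b2} {p : uhom B k b1} :
  Vkernel_pair m p p -> MonoV B b1 b2 m.
Proof. intros [_ Hpb] A. exact (mono_of_pullback_diag (Hpb A)). Qed.

Lemma EpiV_of_Vcokernel_pair_diag {a1 a2 q : B} {e : uhom B a1 a2} {i : uhom B a2 q} :
  Vcokernel_pair e i i -> EpiV B a1 a2 e.
Proof. intros [_ Hpb] C. exact (mono_of_pullback_diag (Hpb C)). Qed.

Lemma rorth_EpiV_MonoV {b1 b2 : B} (m : uhom B b1 b2) :
  has_Vkernel_pairs B -> rorth B (EpiV B) b1 b2 m -> MonoV B b1 b2 m.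
Proof.
  intros HK Hm.
  destruct (HK b1 b2 m) as (k & p1 & p2 & Hker).
  pose proof Hker as [[Hsq Huniv] _].
  destruct (Huniv b1 (vid B b1) (vid B b1) eq_refl) as (δ & [Hp1δ Hp2δ] & _).
  assert (Hp : p2 = p1).
  { apply (orthV_split_epi_eq Hp1δ Hp2δ (Hm _ _ p1 (EpiV_split Hp1δ))).
    symmetry; exact Hsq. }
  subst p2. exact (MonoV_of_Vkernel_pair_diag Hker).
Qed.

Lemma lorth_StrMonoV_EpiV {a1 a2 : B} (e : uhom B a1 a2) :
  has_Vcokernel_pairs B -> lorth B (StrMonoV B) a1 a2 e -> EpiV B a1 a2 e.
Proof.
  intros HC He.
  destruct (HC a1 a2 e) as (q & i1 & i2 & Hcok).
  pose proof Hcok as [[Hsq Huniv] _].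
  destruct (Huniv a2 (vid B a2) (vid B a2) eq_refl) as (n & [Hni1 Hni2] & _).
  assert (Hi : i2 = i1).
  { apply (orthV_split_mono_eq Hni1 Hni2 (He _ _ i1 (StrMonoV_split Hni1))).
    symmetry; exact Hsq. }
  subst i2. exact (EpiV_of_Vcokernel_pair_diag Hcok).
Qed.

End Orthogonality.

Theorem proposition6p5 (V : Category) (M : ClosedSymMonoidal V)
  (B : VCategory M) :
  has_Vkernel_pairs B ->
  (forall (b1 b2 : B) (m : uhom B b1 b2),
      StrMonoV B b1 b2 m <-> rorth B (EpiV B) b1 b2 m) /\
  (has_Vcokernel_pairs B ->
   forall (a1 a2 : B) (e : uhom B a1 a2),
      EpiV B a1 a2 e <-> lorth B (StrMonoV B) a1 a2 e).
Proof.
  intros HK. split.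
  - intros b1 b2 m. split.
    + intros [Hm _]. exact Hm.
    + intros Hm. exact (conj Hm (rorth_EpiV_MonoV m HK Hm)).
  - intros HC a1 a2 e. split.
    + intros He b1 b2 m [Hm _]. exact (Hm a1 a2 e He).
    + exact (lorth_StrMonoV_EpiV e HC).
Qed.
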